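(* Assume the setting in the context. Let $x_i,x_j,x_k\in X$ be distinct, and assume $x_k$ is neither a parent of $x_i$ nor a parent of $x_j$. If there exist $G_1,G_2\in\mathcal G$, $M\subseteq X\setminus\{x_i,x_j,x_k\}$ and $N\subseteq X\setminus\{x_i,x_j\}$ with $x_i-G_1(M\cup\{x_k\})\perp\!\!\!\perp x_j-G_2(N)$, then there exist $G_1',G_2'\in\mathcal G$, $M'\subseteq X\setminus\{x_i,x_j,x_k\}$ and $N'\subseteq X\setminus\{x_i,x_j\}$ with $x_i-G_1'(M')\perp\!\!\!\perp x_j-G_2'(N')$.
   Context: Model: $X$ is a finite set of observed random variables and $U$ a finite set of unobserved random variables; $V=X\cup U$ and $G=(V,E)$ is a DAG on $V$. Each $v_i\in V$ satisfies $v_i=\sum_{x_j\in \mathrm{pa}(v_i)\cap X} f^{(i)}_j(x_j)+\sum_{u_k\in\mathrm{pa}(v_i)\cap U} f^{(i)}_k(u_k)+n_i$, where the $f$'s are nonlinear functions and the external noises $n_i$ are jointly independent. ''Parent'', ''ancestor'', ''path'', ''d-separation'' refer to $G$ (a path has distinct vertices). Causal Faithfulness Condition (CFC): any conditional independence among variables of $V$ that is not entailed by d-separation in $G$ does not hold. $\perp\!\!\!\perp$ denotes statistical independence, $\not\perp\!\!\!\perp$ dependence. Function class: $\mathcal G$ is a class of generalized additive functions: for $G\in\mathcal G$ and a set $M$ of observed variables, $G(M)=\sum_{x_m\in M} g_m(x_m)$ (with $G(\emptyset)=0$). It satisfies: for any $x_i,x_j\in X$, sets $M,N\subseteq X$,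 $G_1,G_2\in\mathcal G$ and external noise $n_k$, if $n_k\not\perp\!\!\!\perp x_i-G_1(M)$ and $n_k\not\perp\!\!\!\perp x_j-G_2(N)$ then $x_i-G_1(M)\not\perp\!\!\!\perp x_j-G_2(N)$. Definitions, for $X'\subseteq X$ and $x_i,x_j\in X'$: an unobserved causal path (UCP) from $x_i$ to $x_j$ w.r.t. $X'$ is a directed path $x_i\to\cdots\to v_k\to x_j$ in $G$ with $v_k\notin X'$; an unobserved backdoor path (UBP) between $x_i$ and $x_j$ w.r.t. $X'$ is a path $x_i\leftarrow v_k\leftarrow\cdots\leftarrow v\to\cdots\to v_l\to x_j$ with $v_k,v_l\notin X'$ (allowing $v=v_k$, $v=v_l$, or $v=v_k=v_l$; $v$ may be in $X'$). ''UBP/UCP between $x_i$ and $x_j$'' means a UBP or a UCP in either direction. $x_j$ is a visible parent of $x_i$ w.r.t. $X'$ if $x_j$ is a parent of $x_i$ and there is no UBP/UCP between them w.r.t. $X'$; $(x_i,x_j)$ is a visible non-edge w.r.t. $X'$ if there is no edge between them and no UBP/UCP between them w.r.t. $X'$; $(x_i,x_j)$ is invisible w.r.t. $X'$ if there is a UBP/UCP between them w.r.t. $X'$. When $X'$ is omitted, $X'=X$. Standing facts (taken as known), for $X'\subseteq X$ and distinct $x_i,x_j\in X'$: (F1) $x_j$ is a visible parent of $x_i$ w.r.t. $X'$ iff [for all $G_1,G_2\in\mathcal G$, $M\subseteq X'\setminus\{x_i,x_j\}$, $N\subseteq X'\setminus\{x_j\}$: $x_i-G_1(M)\not\perp\!\!\!\perp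 x_j-G_2(N)$] and [there exist $G_1,G_2\in\mathcal G$, $M\subseteq X'\setminus\{x_i\}$, $N\subseteq X'\setminus\{x_i,x_j\}$ with $x_i-G_1(M)\perp\!\!\!\perp x_j-G_2(N)$]. (F2) $(x_i,x_j)$ is a visible non-edge w.r.t. $X'$ iff there exist $G_1,G_2\in\mathcal G$ and $M,N\subseteq X'\setminus\{x_i,x_j\}$ with $x_i-G_1(M)\perp\!\!\!\perp x_j-G_2(N)$. (F3) $(x_i,x_j)$ is invisible w.r.t. $X'$ iff for all $M\subseteq X'\setminus\{x_i\}$, $N\subseteq X'\setminus\{x_j\}$, $G_1,G_2\in\mathcal G$: $x_i-G_1(M)\not\perp\!\!\!\perp x_j-G_2(N)$. *)

From HB Require Import structures.
From mathcomp Require Import all_boot all_order all_algebra.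
From mathcomp Require Import all_classical all_reals all_analysis.
Set Implicit Arguments. Unset Strict Implicit. Unset Printing Implicit Defensive.
Import Order.TTheory GRing.Theory Num.Theory.
Local Open Scope classical_set_scope.
Local Open Scope ring_scope.

Section Defs.
Variables (V : finType) (E : rel V).
(* E u v  <->  u -> v is an edge of the DAG G = (V, E) *)

Definition acyclic_graph : Prop := forall u v, E u v -> ~ connect E v u.

Definition adj (u v : V) : bool := E u v || E v u.

Definition blocked (s : seq V) (Z : {set V}) : Prop :=
  exists (s1 s2 : seq V) (a v b : V),
    s = s1 ++ [:: a; v; b] ++ s2 /\
    ( (~~ (E a v && E b v) /\ v \in Z) \/
      (E a v && E b v /\ forall w, connect E v w -> w \notin Z) ).

Definition dsep (A B Z : {set V}) : Prop :=
  forall (a b : V) (p : seq V), a \in A -> b \in B ->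
    uniq (a :: p) -> path adj a p -> last a p = b -> blocked (a :: p) Z.

Definition UCP (X' : {set V}) (xi xj : V) : Prop :=
  exists (p : seq V) (vk : V),
    uniq (xi :: p ++ [:: vk; xj]) /\ path E xi (p ++ [:: vk; xj]) /\
    vk \notin X'.

(* unobserved backdoor path between xi and xj w.r.t. X' :
   xi <- vk <- ... <- v -> ... -> vl -> xj, distinct vertices,
   vk, vl \notin X' (v = vk, v = vl, v = vk = vl allowed) ;
   here v :: p1 is the directed path v -> ... -> vk and
   v :: p2 the directed path v -> ... -> vl *)
Definition UBP (X' : {set V}) (xi xj : V) : Prop :=
  exists (v : V) (p1 p2 : seq V),
    uniq (xi :: xj :: v :: p1 ++ p2) /\
    path E v p1 /\ path E v p2 /\
    E (last v p1) xi /\ E (last v p2) xj /\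
    last v p1 \notin X' /\ last v p2 \notin X'.

Definition UBP_UCP_between (X' : {set V}) (xi xj : V) : Prop :=
  UBP X' xi xj \/ UBP X' xj xi \/ UCP X' xi xj \/ UCP X' xj xi.

Definition visible_parent (X' : {set V}) (xi xj : V) : Prop :=
  E xj xi /\ ~ UBP_UCP_between X' xi xj.

Definition visible_nonedge (X' : {set V}) (xi xj : V) : Prop :=
  ~~ adj xi xj /\ ~ UBP_UCP_between X' xi xj.

Definition invisible (X' : {set V}) (xi xj : V) : Prop :=
  UBP_UCP_between X' xi xj.

Variables (d : measure_display) (T : measurableType d) (R : realType)
          (P : probability T R).

Definition indep (Y Z : T -> R) : Prop :=
  forall A B : set R, measurable A -> measurable B ->
    P (Y @^-1` A `&` Z @^-1` B) = (P (Y @^-1` A) * P (Z @^-1` B))%E.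

Definition mutually_indep (n : V -> T -> R) : Prop :=
  forall B : V -> set R, (forall v, measurable (B v)) ->
    P (\bigcap_v (n v @^-1` B v)) = \big[*%E/1%E]_(v : V) P (n v @^-1` B v).

Definition sigmaS (x : V -> T -> R) (S : {set V}) : set (set T) :=
  <<s [set A | exists v, v \in S /\
                 exists B : set R, measurable B /\ A = x v @^-1` B] >>.

(* conditional independence (x_A  indep  x_B | x_C): for every event a of
   sigma(x_A), a version of P(a | sigma(x_B, x_C)) is sigma(x_C)-measurable *)
Definition cond_indep (x : V -> T -> R) (A B C : {set V}) : Prop :=
  forall a, sigmaS x A a ->
    exists phi : T -> R,
      (forall w, 0 <= phi w <= 1) /\
      (forall D : set R, measurable D -> sigmaS x C (phi @^-1` D)) /\
      (forall b c, sigmaS x B b -> sigmaS x C c ->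
         P (a `&` b `&` c) = (\int[P]_(w in b `&` c) (phi w)%:E)%E).

Definition CFC (x : V -> T -> R) : Prop :=
  forall A B C : {set V},
    A :&: B = finset.set0 -> A :&: C = finset.set0 -> B :&: C = finset.set0 ->
    cond_indep x A B C -> dsep A B C.

Definition ANM_model (x n : V -> T -> R) (f : V -> V -> R -> R) : Prop :=
  acyclic_graph /\
  (forall v, measurable_fun setT (n v)) /\
  mutually_indep n /\
  (forall i j, measurable_fun setT (f i j)) /\
  (forall i j, E j i -> ~ exists a b : R, forall r, f i j r = a * r + b) /\
  (forall i w, x i w = \sum_(j | E j i) f i j (x j w) + n i w) /\
  CFC x.

Definition resid (x : V -> T -> R) (g : V -> R -> R) (xi : V) (M : {set V})
  : T -> R := fun w => x xi w - \sum_(m in M) g m (x m w).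

Definition class_property (obs : {set V}) (x n : V -> T -> R)
  (Gc : set (V -> R -> R)) : Prop :=
  forall (xi xj : V) (M N : {set V}) (g1 g2 : V -> R -> R) (k : V),
    xi \in obs -> xj \in obs -> M \subset obs -> N \subset obs ->
    Gc g1 -> Gc g2 ->
    ~ indep (n k) (resid x g1 xi M) -> ~ indep (n k) (resid x g2 xj N) ->
    ~ indep (resid x g1 xi M) (resid x g2 xj N).

(* standing facts (F1), (F2), (F3) *)
Definition standing_facts (obs : {set V}) (x : V -> T -> R)
  (Gc : set (V -> R -> R)) : Prop :=
  forall (X' : {set V}) (xi xj : V),
    X' \subset obs -> xi \in X' -> xj \in X' -> xi != xj ->
    [/\ visible_parent X' xi xj <->
          ((forall g1 g2 (M N : {set V}), Gc g1 -> Gc g2 ->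
              M \subset X' :\: [set xi; xj] -> N \subset X' :\ xj ->
              ~ indep (resid x g1 xi M) (resid x g2 xj N)) /\
           (exists g1 g2 (M N : {set V}), [/\ Gc g1, Gc g2,
              M \subset X' :\ xi, N \subset X' :\: [set xi; xj] &
              indep (resid x g1 xi M) (resid x g2 xj N)])),
        visible_nonedge X' xi xj <->
          (exists g1 g2 (M N : {set V}), [/\ Gc g1, Gc g2,
              M \subset X' :\: [set xi; xj], N \subset X' :\: [set xi; xj] &
              indep (resid x g1 xi M) (resid x g2 xj N)])
      & invisible X' xi xj <->
          (forall g1 g2 (M N : {set V}), Gc g1 -> Gc g2 ->
              M \subset X' :\ xi -> N \subset X' :\ xj ->
              ~ indep (resid x g1 xi M) (resid x g2 xj N))].

End Defs.

From HB Require Import structures.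
From mathcomp Require Import all_boot all_order all_algebra.
From mathcomp Require Import all_classical all_reals all_analysis.
Set Implicit Arguments. Unset Strict Implicit. Unset Printing Implicit Defensive.
Local Open Scope classical_set_scope.
Local Open Scope ring_scope.

(* Since x_k lies in M ∪ {x_k} ⊆ X \ {x_i, x_j}, the hypothesis is already a
   witness for (F2): (x_i, x_j) is a visible non-edge w.r.t. X.  Removing x_k
   from the observed set cannot create an unobserved causal or backdoor path
   between x_i and x_j, because the last hidden vertex of such a path is a
   parent of x_i or x_j, and x_k is neither.  So (x_i, x_j) is still a visible
   non-edge w.r.t. X \ {x_k}, and (F2) there yields regressor sets avoiding x_k. *)

Section HiddenPaths.
Variables (V : finType) (E : rel V).

Lemma UCP_setD1 (X : {set V}) (a b k : V) :
  ~~ E k b -> UCP E (X :\ k) a b -> UCP E X a b.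
Proof.
move=> Nkb [p [v [p_uniq [p_path vX]]]]; exists p, v; do 2!split => //.
have Evb : E v b by move: p_path; rewrite cat_path /= => /and3P[_ _]; rewrite andbT.
move: vX; rewrite !inE negb_and negbK => /orP[/eqP v_k|//].
by rewrite -v_k Evb in Nkb.
Qed.

Lemma UBP_setD1 (X : {set V}) (a b k : V) :
  ~~ E k a -> ~~ E k b -> UBP E (X :\ k) a b -> UBP E X a b.
Proof.
have notin_X u c : ~~ E k c -> E u c -> u \notin X :\ k -> u \notin X.
  move=> Nkc Euc; rewrite !inE negb_and negbK => /orP[/eqP u_k|//].
  by rewrite -u_k Euc in Nkc.
move=> Nka Nkb [v [p1 [p2 [uq [P1 [P2 [E1 [E2 [N1 N2]]]]]]]]].
exists v, p1, p2; do 6!split => //.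
- exact: notin_X Nka E1 N1.
- exact: notin_X Nkb E2 N2.
Qed.

Lemma UBP_UCP_between_setD1 (X : {set V}) (a b k : V) :
  ~~ E k a -> ~~ E k b ->
  UBP_UCP_between E (X :\ k) a b -> UBP_UCP_between E X a b.
Proof.
move=> Nka Nkb [H|[H|[H|H]]].
- by left; apply: UBP_setD1 H.
- by right; left; apply: UBP_setD1 H.
- by right; right; left; apply: UCP_setD1 H.
- by right; right; right; apply: UCP_setD1 H.
Qed.

Lemma visible_nonedge_setD1 (X : {set V}) (a b k : V) :
  ~~ E k a -> ~~ E k b ->
  visible_nonedge E X a b -> visible_nonedge E (X :\ k) a b.
Proof.
move=> Nka Nkb [Nab Nbetween]; split => // H.
exact: Nbetween (UBP_UCP_between_setD1 Nka Nkb H).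
Qed.

End HiddenPaths.

Lemma setD1_setD (T : finType) (A : {set T}) (a b c : T) :
  A :\ c :\: [set a; b] = A :\: [set a; b; c].
Proof. by rewrite finset.setDDl finset.setUC. Qed.

Theorem proposition4
  (V : finType) (E : rel V) (obs : {set V})
  (d : measure_display) (T : measurableType d) (R : realType)
  (P : probability T R)
  (x n : V -> T -> R) (f : V -> V -> R -> R) (Gc : set (V -> R -> R))
  (Hmodel : ANM_model E P x n f)
  (Hclass : class_property P obs x n Gc)
  (Hfacts : standing_facts E P obs x Gc)
  (xi xj xk : V)
  (Hi : xi \in obs) (Hj : xj \in obs) (Hk : xk \in obs)
  (Hij : xi != xj) (Hik : xi != xk) (Hjk : xj != xk)
  (Hki : ~~ E xk xi) (Hkj : ~~ E xk xj) :
  (exists (g1 g2 : V -> R -> R) (M N : {set V}),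
     [/\ Gc g1, Gc g2,
         M \subset obs :\: [set xi; xj; xk],
         N \subset obs :\: [set xi; xj] &
         indep P (resid x g1 xi (xk |: M)) (resid x g2 xj N)]) ->
  exists (g1' g2' : V -> R -> R) (M' N' : {set V}),
     [/\ Gc g1', Gc g2',
         M' \subset obs :\: [set xi; xj; xk],
         N' \subset obs :\: [set xi; xj] &
         indep P (resid x g1' xi M') (resid x g2' xj N')].
Proof.
move=> [g1 [g2 [M [N [G1 G2 sM sN indep_res]]]]].
have sxkM : xk |: M \subset obs :\: [set xi; xj].
  rewrite finset.subUset finset.sub1set !inE negb_or Hk andbT !(eq_sym xk) Hik Hjk /=.
  apply: fintype.subset_trans sM _; apply: finset.setDS.
  by rewrite !finset.subUset !finset.sub1set !inE !eqxx /= orbT.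
have [_ [_ F2_obs] _] := Hfacts obs xi xj (subxx obs) Hi Hj Hij.
have vne : visible_nonedge E obs xi xj by apply: F2_obs; exists g1, g2, (xk |: M), N.
have Hi' : xi \in obs :\ xk by rewrite !inE Hik Hi.
have Hj' : xj \in obs :\ xk by rewrite !inE Hjk Hj.
have [_ [F2_obs_xk _] _] := Hfacts (obs :\ xk) xi xj (subD1set obs xk) Hi' Hj' Hij.
have [h1 [h2 [M' [N' [H1 H2 sM' sN' indep_res']]]]] :=
  F2_obs_xk (visible_nonedge_setD1 Hki Hkj vne).
exists h1, h2, M', N'; split; [exact: H1 | exact: H2 | | | exact: indep_res'].
- by rewrite -setD1_setD.
- by apply: fintype.subset_trans sN' _; apply: finset.setSD; apply: finset.subD1set.
Qed.
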